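(* Let $q=p^m$ with $p$ prime, let $\gamma$ be such that $\mathbb{F}_q=\mathbb{F}_p[\gamma]$, and let $t=\lfloor\frac{m-1}{4}\rfloor$. Let $n,k$ be integers with $5\le k\le\frac{n-2}{2}$ and $n\le p^t$. Let $g_1(x),\dots,g_n(x)\in\mathbb{F}_p[x]$ be pairwise distinct monic polynomials of degree exactly $t$, and set $\alpha_i=g_i(\gamma)$ for $1\le i\le n$. Let $C_{k-1,k-2}$ be the linear code over $\mathbb{F}_q$ generated by the $k\times n$ matrix whose rows are $(\alpha_1^{e},\dots,\alpha_n^{e})$ for $e=0,1,\dots,k-3,k,k+1$. If $p\nmid \frac{1}{12}k^2(k^2-1)$, then $C_{k-1,k-2}$ is an $[n,k]$ non-GRS MDS code over $\mathbb{F}_q$.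
   Context: Convention: $0^0=1$. Note $\frac{1}{12}k^2(k^2-1)$ is an integer. A linear code is MDS if its parameters $[n,k,d]$ satisfy $d=n-k+1$. For pairwise distinct $a_1,\dots,a_n\in\mathbb{F}_q$ and $w\in(\mathbb{F}_q^* )^n$, the generalized Reed–Solomon code is $GRS(n,k,\{a_i\},w)=\{(w_1f(a_1),\dots,w_nf(a_n)) : f\in\mathbb{F}_q[x],\ \deg f\le k-1\}$. Two codes are (monomially) equivalent if one is obtained from the other by a permutation of coordinates and multiplication of coordinates by nonzero scalars. A non-GRS MDS code is an MDS code not equivalent to any GRS code. *)

From HB Require Import structures.
From mathcomp Require Import all_boot all_order all_algebra all_fingroup all_field.
Set Implicit Arguments. Unset Strict Implicit. Unset Printing Implicit Defensive.
Import GRing.Theory.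
Local Open Scope ring_scope.

Section Codes.
Variable F : fieldType.

Definition wt n (c : 'rV[F]_n) : nat := #|[set i : 'I_n | c 0 i != 0]|.

(* The linear code generated by G is its row space: c is a codeword iff (c <= G)%MS. *)
Definition min_dist_eq k n (G : 'M[F]_(k, n)) (d : nat) : Prop :=
  (forall c : 'rV[F]_n, (c <= G)%MS -> c != 0 -> (d <= wt c)%N) /\
  (exists2 c : 'rV[F]_n, (c <= G)%MS && (c != 0) & wt c = d).

Definition is_nk_MDS k n (G : 'M[F]_(k, n)) : Prop :=
  \rank G = k /\ min_dist_eq G (n - k + 1).

Definition code_equiv k1 k2 n (A : 'M[F]_(k1, n)) (B : 'M[F]_(k2, n)) : Prop :=
  exists (s : 'S_n) (v : 'I_n -> F), (forall i, v i != 0) /\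
    (A == B *m (perm_mx s *m diag_mx (\row_i v i)))%MS.

Definition GRSmx k n (a : 'I_n -> F) (w : 'I_n -> F) : 'M[F]_(k, n) :=
  \matrix_(j < k, i < n) (w i * a i ^+ j).

Definition is_GRS_equiv k n (A : 'M[F]_(k, n)) : Prop :=
  exists (k' : nat) (a : 'I_n -> F) (w : 'I_n -> F),
    injective a /\ (forall i, w i != 0) /\ code_equiv A (GRSmx k' a w).

Definition is_nonGRS_MDS k n (A : 'M[F]_(k, n)) : Prop :=
  is_nk_MDS A /\ ~ is_GRS_equiv A.

Definition expo (k j : nat) : nat := if (j < k - 2)%N then j else (j + 2)%N.

Definition Ckmx k n (a : 'I_n -> F) : 'M[F]_(k, n) :=
  \matrix_(j < k, i < n) (a i ^+ expo k j).

End Codes.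

Definition Fp_embed (F : fieldType) (p : nat) (c : 'F_p) : F := (val c)%:R.
Definition poly_Fp_eval (F : fieldType) (p : nat) (g : {poly 'F_p}) (x : F) : F :=
  (map_poly (@Fp_embed F p) g).[x].

From HB Require Import structures.
From mathcomp Require Import all_boot all_order all_algebra all_fingroup all_field.
From mathcomp Require Import zify ring.

Set Implicit Arguments.
Unset Strict Implicit.
Unset Printing Implicit Defensive.
Import GRing.Theory.
Local Open Scope ring_scope.

(* The code is MDS iff any k columns, at distinct points b_1..b_k, are independent.
   A vector annihilating them gives f = sum_j c_j X^(e_j), e_j in {0..k-3,k,k+1}, with
   roots b_1..b_k, so f = (h0 + h1 X) P for P = prod (X - b_l). As f has no X^(k-2) and
   X^(k-1) terms, h0 and h1 solve a 2x2 linear system with determinant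
   P_(k-2)^2 - P_(k-1) P_(k-3) = s_2^2 - s_1 s_3 (elementary symmetric functions), so
   f = 0 whenever it is nonzero. For b_l = g_l(gamma) this determinant is D(gamma) for a
   polynomial D over F_p of degree <= 4t < m whose x^(4t)-coefficient is
   C(k,2)^2 - k C(k,3) = k^2 (k^2 - 1) / 12, nonzero mod p, while no nonzero polynomial of
   degree < m over F_p vanishes at gamma.
   The code is not GRS because its Schur square contains the 2k independent vectors
   (a_i^e)_i, e in {0..2k-2, 2k}, whereas the Schur square of a GRS code of dimension k
   has dimension at most 2k - 1. *)

Lemma binom2_sqr k : (2 <= k)%N ->
  ('C(k, 2) * 'C(k, 2) = k * 'C(k, 3) + (k ^ 2 * (k ^ 2 - 1)) %/ 12)%N.
Proof.
move=> k_ge2.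
have bin2E : ('C(k, 2) * 2 = k * (k - 1))%N.
  by rewrite -[2%N]/(2`!) bin_ffact !ffactnS ffactn0 muln1 subn1.
have bin3E : ('C(k, 3) * 6 = k * ((k - 1) * (k - 2)))%N.
  by rewrite -[6%N]/(3`!) bin_ffact !ffactnS ffactn0 muln1 -!subn1 -subnDA.
have twelveE : (12 * ('C(k, 2) * 'C(k, 2))
                = 12 * (k * 'C(k, 3)) + k ^ 2 * (k ^ 2 - 1))%N.
  have -> : (12 * ('C(k, 2) * 'C(k, 2))
             = 3 * (('C(k, 2) * 2) * ('C(k, 2) * 2)))%N by ring.
  have -> : (12 * (k * 'C(k, 3)) = 2 * k * ('C(k, 3) * 6))%N by ring.
  rewrite bin2E bin3E; case: k k_ge2 {bin2E bin3E} => [|[|j]] // _.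
  have -> : (j.+2 ^ 2 - 1 = j.+1 * j.+3)%N by rewrite expnS expn1; lia.
  rewrite !subSS !subn0 expnS expn1; ring.
have -> : (k ^ 2 * (k ^ 2 - 1) = 12 * ('C(k, 2) * 'C(k, 2) - k * 'C(k, 3)))%N.
  by lia.
rewrite mulKn //; lia.
Qed.

Definition gap_disc (R : nzRingType) (i : nat) (P : {poly R}) : R :=
  P`_i.+1 ^+ 2 - P`_i.+2 * P`_i.

Section TopCoefficient.
Variable R : comNzRingType.

Definition lead_at (d : nat) (c : R) (f : {poly R}) : Prop :=
  (size f <= d.+1)%N /\ f`_d = c.

Lemma gap_disc_map (S : nzRingType) (f : {rmorphism R -> S}) i (P : {poly R}) :
  gap_disc i (map_poly f P) = f (gap_disc i P).
Proof. by rewrite /gap_disc !coef_map rmorphB rmorphXn rmorphM. Qed.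

Lemma lead_atM a b c c' (f f' : {poly R}) :
  lead_at a c f -> lead_at b c' f' -> lead_at (a + b) (c * c') (f * f').
Proof.
move=> [szf <-] [szf' <-]; split.
  by apply: leq_trans (size_polyMleq f f') _; lia.
rewrite coefM (bigD1 (@Ordinal (a + b).+1 a (leq_addr b a))) //= addKn big1 ?addr0 //.
move=> [j lt_j] /=; rewrite -val_eqE /= => ne_ja.
case: (ltngtP j a) ne_ja => // [lt_ja | lt_aj] _.
  by rewrite [f'`_ _]nth_default ?mulr0 //; apply: leq_trans szf' _; lia.
by rewrite [f`_ _]nth_default ?mul0r //; apply: leq_trans szf _.
Qed.

Lemma lead_atD d c c' (f f' : {poly R}) :
  lead_at d c f -> lead_at d c' f' -> lead_at d (c + c') (f + f').
Proof.
move=> [szf <-] [szf' <-]; split; last exact: coefD.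
by apply: leq_trans (size_polyD f f') _; rewrite geq_max szf.
Qed.

Lemma lead_atN d c (f : {poly R}) : lead_at d c f -> lead_at d (- c) (- f).
Proof. by move=> [szf <-]; rewrite /lead_at size_polyN coefN. Qed.

Lemma lead_at_sign d j c (f : {poly R}) :
  lead_at d c f -> lead_at d ((-1) ^+ j * c) ((-1) ^+ j * f).
Proof.
move=> lead_f; elim: j => [|j IH]; first by rewrite !expr0 !mul1r.
by rewrite !exprSr -!mulrA !mulN1r !mulrN; apply: lead_atN.
Qed.

Lemma lead_at_prod (I : finType) (A : {pred I}) t (F : I -> {poly R}) :
  (forall i, i \in A -> lead_at t 1 (F i)) -> lead_at (#|A| * t) 1 (\prod_(i in A) F i).
Proof.
move=> leadF; rewrite -sum1_card big_distrl /=.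
apply: (big_ind2 (fun d f => lead_at d 1 f)); first by rewrite /lead_at size_poly1 coef1.
  by move=> d f d' f' /lead_atM h /h; rewrite mulr1.
by move=> i /leadF; rewrite mul1n.
Qed.

Lemma lead_at_sum I (r : seq I) (P : pred I) d (c : I -> R) (F : I -> {poly R}) :
  (forall i, P i -> lead_at d (c i) (F i)) ->
  lead_at d (\sum_(i <- r | P i) c i) (\sum_(i <- r | P i) F i).
Proof.
apply: big_ind2 => [|? ? ? ?]; last exact: lead_atD.
by rewrite /lead_at size_poly0 coef0.
Qed.

Lemma lead_at_coef_prod_XsubC t (s : seq {poly R}) j :
  (forall g, g \in s -> lead_at t 1 g) -> (j <= size s)%N ->
  lead_at (j * t) ((-1) ^+ j * 'C(size s, j)%:R)
          (\prod_(g <- s) ('X - g%:P))`_(size s - j).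
Proof.
move=> lead_s le_js; rewrite coef_prod_XsubC ?leq_subr // subKn //.
apply: lead_at_sign.
have -> : 'C(size s, j)%:R = \sum_(I : {set 'I_(size s)} | #|I| == j) (1 : R).
  by rewrite sumr_const -[in LHS](card_ord (size s)) -card_draws cardsE.
apply: lead_at_sum => I /eqP <-; apply: lead_at_prod => i _.
by apply: lead_s; apply: mem_nth.
Qed.

Lemma lead_at_gap_disc_prod_XsubC t i (G : 'I_i.+3 -> {poly R}) :
  (forall l, lead_at t 1 (G l)) ->
  lead_at (4 * t) ((i.+3 ^ 2 * (i.+3 ^ 2 - 1)) %/ 12)%:R
          (gap_disc i (\prod_(l < i.+3) ('X - (G l)%:P))).
Proof.
move=> lead_G; rewrite -big_enum -(big_map G predT (fun g => 'X - g%:P)).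
set s := map G _; have size_s : size s = i.+3 by rewrite size_map size_enum_ord.
have lead_s g : g \in s -> lead_at t 1 g by move=> /mapP[l _ ->].
have coefP j : (j <= 3)%N -> lead_at (j * t) ((-1) ^+ j * 'C(i.+3, j)%:R)
    (\prod_(g <- s) ('X - g%:P))`_(i.+3 - j).
  move=> le_j3; rewrite -size_s; apply: lead_at_coef_prod_XsubC => //.
  by rewrite size_s (leq_trans le_j3).
have /(congr1 (fun n => n%:R : R)) := binom2_sqr (isT : (2 <= i.+3)%N).
rewrite natrD !natrM => binE.
have -> : ((i.+3 ^ 2 * (i.+3 ^ 2 - 1)) %/ 12)%:R =
    (-1) ^+ 2 * 'C(i.+3, 2)%:R * ((-1) ^+ 2 * 'C(i.+3, 2)%:R)
    - (-1) ^+ 1 * 'C(i.+3, 1)%:R * ((-1) ^+ 3 * 'C(i.+3, 3)%:R) :> R.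
  by rewrite bin1 -[LHS](addKr (i.+3%:R * 'C(i.+3, 3)%:R)) -binE; ring.
rewrite /gap_disc expr2 (_ : 4 * t = 2 * t + 2 * t)%N; last by lia.
apply: lead_atD.
  by have := lead_atM (coefP 2%N isT) (coefP 2%N isT); rewrite !subSS !subn0.
apply: lead_atN; rewrite (_ : 2 * t + 2 * t = 1 * t + 3 * t)%N; last by lia.
by have := lead_atM (coefP 1%N isT) (coefP 3%N isT); rewrite !subSS !subn0.
Qed.

End TopCoefficient.

Section SparsePolynomials.
Variable F : fieldType.

Definition sparse_poly r (e : 'I_r -> nat) (c : 'rV[F]_r) : {poly F} :=
  \sum_(j < r) c 0 j *: 'X^(e j).

Variables (r : nat) (e : 'I_r -> nat).

Lemma horner_sparse_poly c x :
  (sparse_poly e c).[x] = \sum_(j < r) c 0 j * x ^+ e j.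
Proof. by rewrite horner_sum; apply: eq_bigr => j _; rewrite hornerZ hornerXn. Qed.

Lemma coef_sparse_poly_out c d : (forall j, e j != d) -> (sparse_poly e c)`_d = 0.
Proof.
by move=> e_d; rewrite coef_sumMXn big1 // => j; rewrite (negbTE (e_d j)) andbF.
Qed.

Lemma size_sparse_poly c d : (forall j, (e j < d)%N) -> (size (sparse_poly e c) <= d)%N.
Proof.
move=> lt_e; apply/leq_sizeP => i le_di; apply: coef_sparse_poly_out => j.
by rewrite neq_ltn (leq_trans (lt_e j)).
Qed.

Hypothesis e_inj : injective e.

Lemma coef_sparse_poly c j : (sparse_poly e c)`_(e j) = c 0 j.
Proof.
by rewrite coef_sumMXn (big_pred1 j) // => j' /=; rewrite (inj_eq e_inj).
Qed.

Lemma sparse_poly_eq0 c : sparse_poly e c = 0 -> c = 0.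
Proof. by move=> c0; apply/rowP => j; rewrite -coef_sparse_poly c0 coef0 mxE. Qed.

End SparsePolynomials.

Section PowerMatrices.
Variable F : fieldType.

Definition powmx r n (e : 'I_r -> nat) (a w : 'I_n -> F) : 'M[F]_(r, n) :=
  \matrix_(j < r, i < n) (w i * a i ^+ e j).

Variables (r n : nat) (e : 'I_r -> nat) (a w : 'I_n -> F).

Lemma mulmx_powmx (v : 'rV_r) i :
  (v *m powmx e a w) 0 i = w i * (sparse_poly e v).[a i].
Proof.
rewrite mxE horner_sparse_poly mulr_sumr; apply: eq_bigr => j _.
by rewrite mxE mulrCA.
Qed.

Lemma row_free_powmx : injective e -> (forall j, (e j < n)%N) -> injective a ->
  (forall i, w i != 0) -> row_free (powmx e a w).
Proof.
move=> e_inj lt_e a_inj w_neq0; apply/inj_row_free => v /rowP vM0.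
apply: (sparse_poly_eq0 e_inj).
apply: (@roots_geq_poly_eq0 _ _ [seq a i | i <- enum 'I_n]).
- apply/allP => _ /mapP[i _ ->]; apply/eqP.
  have /eqP := vM0 i; rewrite mulmx_powmx mxE mulf_eq0 (negbTE (w_neq0 i)).
  by move/eqP.
- by rewrite map_inj_uniq ?enum_uniq.
- by rewrite size_map size_enum_ord size_sparse_poly.
Qed.

End PowerMatrices.

Lemma expo_inj k : injective (expo k).
Proof. by move=> x y; rewrite /expo; case: ifP; case: ifP; lia. Qed.

Lemma expo_lt k (j : 'I_k) : (expo k j < k.+2)%N.
Proof. by rewrite /expo; case: ifP; have := ltn_ord j; lia. Qed.

Section GapDiscriminant.
Variable F : fieldType.

Lemma dvdp_gap_eq0 (P f : {poly F}) i :
  P %| f -> (size f <= (size P).+1)%N -> f`_i.+1 = 0 -> f`_i.+2 = 0 ->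
  gap_disc i P != 0 -> f = 0.
Proof.
have [-> /dvd0pP -> // | P_neq0] := eqVneq P 0.
move=> /divpK fE size_f f1 f2 disc_neq0; set h := f %/ P in fE.
have size_h : (size h <= 2)%N.
  by rewrite size_divp // leq_subLR addn2 prednK ?size_poly_gt0.
have coef_hP j : (h * P)`_j.+1 = h`_0 * P`_j.+1 + h`_1 * P`_j.
  rewrite coefM !big_ord_recl big1 => [|l _]; first by rewrite addr0 /= !subSS !subn0.
  by rewrite nth_default ?mul0r // (leq_trans size_h).
rewrite -fE !coef_hP in f1 f2.
have h0 : h`_0 * gap_disc i P = 0.
  transitivity (P`_i.+1 * (h`_0 * P`_i.+1 + h`_1 * P`_i)
                - P`_i * (h`_0 * P`_i.+2 + h`_1 * P`_i.+1)).
    by rewrite /gap_disc; ring.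
  by rewrite f1 f2 !mulr0 subrr.
have h1 : h`_1 * gap_disc i P = 0.
  transitivity (P`_i.+1 * (h`_0 * P`_i.+2 + h`_1 * P`_i.+1)
                - P`_i.+2 * (h`_0 * P`_i.+1 + h`_1 * P`_i)).
    by rewrite /gap_disc; ring.
  by rewrite f1 f2 !mulr0 subrr.
suff h_eq0 : h = 0 by rewrite -fE h_eq0 mul0r.
apply/polyP => -[|[|j]].
- by move/eqP: h0; rewrite coef0 mulf_eq0 (negbTE disc_neq0) orbF => /eqP.
- by move/eqP: h1; rewrite coef0 mulf_eq0 (negbTE disc_neq0) orbF => /eqP.
by rewrite coef0 nth_default // (leq_trans size_h).
Qed.

End GapDiscriminant.

Section GeneratorMatrix.
Variable F : fieldType.

Lemma Ckmx_powmx k n (a : 'I_n -> F) : Ckmx k a = powmx (expo k) a (fun=> 1).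
Proof. by apply/matrixP => j i; rewrite !mxE mul1r. Qed.

Lemma colsub_Ckmx k n n' (s : 'I_n' -> 'I_n) (a : 'I_n -> F) :
  colsub s (Ckmx k a) = Ckmx k (a \o s).
Proof. by apply/matrixP => j i; rewrite !mxE. Qed.

Lemma row_free_Ckmx i (b : 'I_i.+3 -> F) : injective b ->
  gap_disc i (\prod_(l < i.+3) ('X - (b l)%:P)) != 0 -> row_free (Ckmx i.+3 b).
Proof.
move=> b_inj disc_neq0; apply/inj_row_free => v /rowP vC0.
have e_inj : injective (fun j : 'I_i.+3 => expo i.+3 j).
  by move=> x y /expo_inj /val_inj.
apply: (sparse_poly_eq0 e_inj).
rewrite -big_enum -(big_map b predT (fun x => 'X - x%:P)) in disc_neq0.
apply: (dvdp_gap_eq0 _ _ _ _ disc_neq0).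
- apply: uniq_roots_dvdp; last by rewrite uniq_rootsE map_inj_uniq ?enum_uniq.
  apply/allP => _ /mapP[l _ ->]; apply/eqP.
  by have := vC0 l; rewrite Ckmx_powmx mulmx_powmx mxE mul1r.
- rewrite size_prod_XsubC size_map size_enum_ord.
  by apply: size_sparse_poly => j; apply: expo_lt.
- by apply: coef_sparse_poly_out => j; rewrite /expo; case: ifP; have := ltn_ord j; lia.
- by apply: coef_sparse_poly_out => j; rewrite /expo; case: ifP; have := ltn_ord j; lia.
Qed.

Lemma rank_Ckmx k n (a : 'I_n -> F) : (k.+2 <= n)%N -> injective a ->
  \rank (Ckmx k a) = k.
Proof.
move=> le_k2n a_inj; apply/eqP; rewrite Ckmx_powmx.
apply: row_free_powmx => // [j j' /expo_inj/val_inj //|j|].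
  exact: leq_trans (expo_lt j) le_k2n.
by move=> _; apply: oner_neq0.
Qed.

End GeneratorMatrix.

Section MDSCriterion.
Variable F : fieldType.

Definition zeros n (c : 'rV[F]_n) : {set 'I_n} := [set i | c 0 i == 0].

Lemma mem_zeros n (c : 'rV[F]_n) i : (i \in zeros c) = (c 0 i == 0).
Proof. by rewrite inE. Qed.

Lemma wt_add_zeros n (c : 'rV[F]_n) : (wt c + #|zeros c| = n)%N.
Proof.
rewrite /wt -[RHS](card_ord n) -(cardsC (zeros c)) addnC; congr (_ + _)%N.
by apply: eq_card => i; rewrite !inE.
Qed.

Lemma wt_le_sub_zeros n (c : 'rV[F]_n) (Z : {set 'I_n}) :
  Z \subset zeros c -> (wt c <= n - #|Z|)%N.
Proof. by move/subset_leq_card; have := wt_add_zeros c; lia. Qed.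

Lemma ord_inj_in n k (Z : {set 'I_n}) : (k <= #|Z|)%N ->
  exists2 s : 'I_k -> 'I_n, injective s & forall l, s l \in Z.
Proof.
move=> le_kZ; exists (fun l => enum_val (widen_ord le_kZ l)).
  by move=> l l' /enum_val_inj [] /val_inj.
by move=> l; exact: enum_valP.
Qed.

Variables (k n : nat) (G : 'M[F]_(k, n)).
Hypothesis row_free_colsub :
  forall s : 'I_k -> 'I_n, injective s -> row_free (colsub s G).

Lemma card_zeros_lt (x : 'rV_k) : x != 0 -> (#|zeros (x *m G)| < k)%N.
Proof.
apply: contraR; rewrite -leqNgt => /ord_inj_in[s s_inj s_zero].
rewrite -(mulmx_free_eq0 _ (row_free_colsub s_inj)) mulmx_colsub.
by apply/eqP/rowP => l; move: (s_zero l); rewrite mem_zeros !mxE => /eqP.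
Qed.

Hypothesis le_kn : (k <= n)%N.

Lemma wt_mulmx_ge (x : 'rV_k) : x != 0 -> (n - k + 1 <= wt (x *m G))%N.
Proof. by move=> /card_zeros_lt; have := wt_add_zeros (x *m G); lia. Qed.

Lemma row_free_of_colsub : row_free G.
Proof.
apply/inj_row_free => x xG0; apply/eqP; apply: contraT => /card_zeros_lt.
suff -> : zeros (x *m G) = setT by rewrite cardsT card_ord ltnNge le_kn.
by apply/setP => i; rewrite mem_zeros inE xG0 mxE eqxx.
Qed.

Lemma MDS_of_row_free_colsub : (0 < k)%N -> is_nk_MDS G.
Proof.
move=> k_gt0; split; first exact/eqP/row_free_of_colsub.
split=> [_ /submxP[x ->] xG_neq0|].
  by apply: wt_mulmx_ge; apply: contra_neq xG_neq0 => ->; rewrite mul0mx.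
have le_k1n : (k.-1 <= n)%N by rewrite (leq_trans (leq_pred k)).
pose s (l : 'I_k.-1) := widen_ord le_k1n l.
have s_inj : injective s by move=> l l' [] /val_inj.
set x := nz_row (kermx (colsub s G)).
have x_neq0 : x != 0.
  rewrite nz_row_eq0 kermx_eq0 -row_leq_rank -ltnNge.
  by have := rank_leq_col (colsub s G); lia.
have xG_neq0 : x *m G != 0.
  by rewrite (mulmx_free_eq0 _ (row_free_of_colsub)).
exists (x *m G); first by rewrite submxMl xG_neq0.
apply/eqP; rewrite eqn_leq wt_mulmx_ge // andbT.
have xS0 : colsub s (x *m G) = 0.
  by rewrite -mulmx_colsub; apply/sub_kermxP; apply: nz_row_sub.
have /wt_le_sub_zeros : s @: setT \subset zeros (x *m G).
  apply/subsetP => _ /imsetP[l _ ->]; rewrite mem_zeros.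
  by have /rowP/(_ l) := xS0; rewrite mxE [RHS]mxE => ->.
by rewrite card_imset // cardsT card_ord; lia.
Qed.

End MDSCriterion.

Section GeneralizedReedSolomon.
Variables (F : fieldType) (n : nat).
Implicit Types (a w : 'I_n -> F) (c : 'rV[F]_n).

Lemma GRSmx_powmx k a w : GRSmx k a w = powmx (@nat_of_ord k) a w.
Proof. by []. Qed.

Lemma submx_GRSmxP k a w c :
  reflect (exists2 f : {poly F}, (size f <= k)%N & c = \row_i (w i * f.[a i]))
          (c <= GRSmx k a w)%MS.
Proof.
apply: (iffP submxP) => [[y ->] | [f size_f ->]].
  exists (sparse_poly (@nat_of_ord k) y); first exact: size_sparse_poly.
  by apply/rowP => i; rewrite GRSmx_powmx mulmx_powmx mxE.
exists (\row_(j < k) f`_j); apply/rowP => i.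
rewrite !mxE (horner_coef_wide _ size_f) mulr_sumr; apply: eq_bigr => j _.
by rewrite !mxE mulrCA.
Qed.

Lemma GRSmx_sub_GRSmx k1 k2 a w :
  (k1 <= k2)%N -> (GRSmx k1 a w <= GRSmx k2 a w)%MS.
Proof.
move=> le_k12; apply/row_subP => j; apply/submx_GRSmxP.
exists 'X^j; first by rewrite size_polyXn (leq_trans (ltn_ord j)).
by apply/rowP => i; rewrite !mxE hornerXn.
Qed.

Lemma rank_GRSmx k a w : (k <= n)%N -> injective a -> (forall i, w i != 0) ->
  \rank (GRSmx k a w) = k.
Proof.
move=> le_kn a_inj w_neq0; apply/eqP; apply: row_free_powmx => //.
  exact: val_inj.
by move=> j; rewrite (leq_trans (ltn_ord j)).
Qed.

Lemma schur_GRSmx k1 k2 a w c1 c2 :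
  (c1 <= GRSmx k1 a w)%MS -> (c2 <= GRSmx k2 a w)%MS ->
  (\row_i (c1 0 i * c2 0 i)%R <= GRSmx (k1 + k2).-1 a (fun i => w i ^+ 2))%MS.
Proof.
move=> /submx_GRSmxP[f1 size_f1 ->] /submx_GRSmxP[f2 size_f2 ->].
apply/submx_GRSmxP; exists (f1 * f2).
  by rewrite (leq_trans (size_polyMleq _ _)) // -!subn1 leq_sub2r // leq_add.
by apply/rowP => i; rewrite !mxE hornerM; ring.
Qed.

Lemma GRSmx_monomial k a w (s : 'S_n) (v : 'I_n -> F) :
  GRSmx k a w *m (perm_mx s *m diag_mx (\row_i v i))
  = GRSmx k (a \o s^-1%g) (fun i => w (s^-1 i)%g * v i).
Proof.
rewrite mulmxA -[s in perm_mx s](invgK s) -col_permE mul_mx_diag.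
by apply/matrixP => j i; rewrite !mxE mulrAC.
Qed.

Lemma GRS_equivP k (A : 'M[F]_(k, n)) : is_GRS_equiv A ->
  exists k' (b u : 'I_n -> F),
    [/\ injective b, forall i, u i != 0 & (A == GRSmx k' b u)%MS].
Proof.
move=> [k' [a [w [a_inj [w_neq0 [s [v [v_neq0 eqA]]]]]]]].
exists k', (a \o s^-1%g), (fun i => w (s^-1 i)%g * v i).
split; [by move=> i j /a_inj /perm_inj | by move=> i; rewrite mulf_neq0 |].
by rewrite -GRSmx_monomial.
Qed.

End GeneralizedReedSolomon.

(* Sums of two exponents of C_{k-1,k-2} cover 0, ..., 2k-2 and 2k, but not 2k-1. *)
Definition schur_expo k (r : 'I_(2 * k)) : nat :=
  if (r < 2 * k - 1)%N then (r : nat) else (2 * k)%N.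
Arguments schur_expo : clear implicits.

Lemma schur_expo_inj (k : nat) : injective (schur_expo k).
Proof.
move=> r r'; rewrite /schur_expo => e; apply: ord_inj; move: e.
by case: ifP; case: ifP; have := ltn_ord r; have := ltn_ord r'; lia.
Qed.

Lemma schur_expo_lt k (r : 'I_(2 * k)) : (schur_expo k r < (2 * k).+1)%N.
Proof. by rewrite /schur_expo; case: ifP; have := ltn_ord r; lia. Qed.

Lemma expo_add_schur_expo k (r : 'I_(2 * k)) : (5 <= k)%N ->
  exists x1 x2, [/\ (x1 < k)%N, (x2 < k)%N & (expo k x1 + expo k x2)%N = schur_expo k r].
Proof.
move=> k_ge5; have lt_r2k := ltn_ord r.
case: (leqP r (2 * k - 6)) => [le_r | gt_r].
  exists (minn r (k - 3)), (r - minn r (k - 3))%N.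
  by rewrite /expo /schur_expo; split; repeat case: ifP; lia.
case: (leqP r (2 * k - 3)) => [le_r | gt_r'].
  exists (k - 2)%N, (r - k)%N.
  by rewrite /expo /schur_expo; split; repeat case: ifP; lia.
case: (leqP r (2 * k - 2)) => [le_r | gt_r''].
  exists (k - 1)%N, (k - 3)%N.
  by rewrite /expo /schur_expo; split; repeat case: ifP; lia.
exists (k - 2)%N, (k - 2)%N.
by rewrite /expo /schur_expo; split; repeat case: ifP; lia.
Qed.

Section NonGRS.
Variables (F : fieldType) (k n : nat) (a : 'I_n -> F).
Hypotheses (k_ge5 : (5 <= k)%N) (lt_2kn : (2 * k < n)%N) (a_inj : injective a).

Lemma schur_square_Ckmx_sub (b u : 'I_n -> F) k' :
  (Ckmx k a <= GRSmx k' b u)%MS ->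
  (powmx (schur_expo k) a (fun=> 1) <= GRSmx (k' + k').-1 b (fun i => u i ^+ 2))%MS.
Proof.
move=> subCG; apply/row_subP => r.
have [x1 [x2 [lt_x1k lt_x2k expoE]]] := expo_add_schur_expo r k_ge5.
have rowC x (lt_xk : (x < k)%N) : (row (Ordinal lt_xk) (Ckmx k a) <= GRSmx k' b u)%MS.
  exact: submx_trans (row_sub _ _) subCG.
have -> : row r (powmx (schur_expo k) a (fun=> 1))
    = \row_i (row (Ordinal lt_x1k) (Ckmx k a) 0 i * row (Ordinal lt_x2k) (Ckmx k a) 0 i).
  by apply/rowP => i; rewrite !mxE -expoE exprD mul1r.
exact: schur_GRSmx (rowC _ _) (rowC _ _).
Qed.

Lemma Ckmx_not_GRS : ~ is_GRS_equiv (Ckmx k a).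
Proof.
move=> /GRS_equivP[k' [b [u [b_inj u_neq0 /andP[subCG subGC]]]]].
have le_k'k : (k' <= k)%N.
  rewrite leqNgt; apply/negP => lt_kk'.
  have := mxrankS (submx_trans (GRSmx_sub_GRSmx b u lt_kk') subGC).
  by rewrite rank_Ckmx ?rank_GRSmx // ?ltnn //; lia.
have := mxrankS (schur_square_Ckmx_sub subCG).
have -> : \rank (powmx (schur_expo k) a (fun=> 1)) = (2 * k)%N.
  apply/eqP; apply: row_free_powmx => // [|j|]; first exact: schur_expo_inj.
    exact: leq_trans (schur_expo_lt j) lt_2kn.
  by move=> _; apply: oner_neq0.
by have := rank_leq_row (GRSmx (k' + k').-1 b (fun i => u i ^+ 2)); lia.
Qed.

End NonGRS.

Section FpEmbedding.
Variables (F : fieldType) (p : nat).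
Hypothesis pF : p \in [pchar F].

Lemma Fp_embed_nat n : @Fp_embed F p n%:R = n%:R.
Proof.
rewrite /Fp_embed /= val_Fp_nat ?(pcharf_prime pF) //.
by rewrite [in RHS](divn_eq n p) natrD natrM (pcharf0 pF) mulr0 add0r.
Qed.

Lemma Fp_natrE (c : 'F_p) : c = (c : nat)%:R.
Proof. by rewrite natr_Zp. Qed.

Lemma Fp_embedD (a b : 'F_p) :
  @Fp_embed F p (a + b) = @Fp_embed F p a + @Fp_embed F p b.
Proof.
by rewrite [in LHS](Fp_natrE a) [in LHS](Fp_natrE b) -natrD Fp_embed_nat natrD.
Qed.

(* [Fp_embed] indexed by the characteristic hypothesis, so that it can carry a
   canonical ring morphism structure. *)
Definition Fp_embed_char of p \in [pchar F] := @Fp_embed F p.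

Lemma Fp_embed_is_zmod : zmod_morphism (Fp_embed_char pF).
Proof.
move=> a b; apply: (addIr (@Fp_embed F p b)).
by rewrite /Fp_embed_char -Fp_embedD !subrK.
Qed.

Lemma Fp_embed_is_monoid : monoid_morphism (Fp_embed_char pF).
Proof.
split=> [|a b]; first by rewrite -[1]/(1%:R) /Fp_embed_char Fp_embed_nat.
rewrite /Fp_embed_char [in LHS](Fp_natrE a) [in LHS](Fp_natrE b) -natrM.
by rewrite Fp_embed_nat natrM.
Qed.

HB.instance Definition _ := GRing.isZmodMorphism.Build _ _ _ Fp_embed_is_zmod.
HB.instance Definition _ := GRing.isMonoidMorphism.Build _ _ _ Fp_embed_is_monoid.

Variable gamma : F.

Definition Fp_eval : {poly 'F_p} -> F :=
  horner_morph (fun c => mulrC gamma (Fp_embed_char pF c)).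

HB.instance Definition _ := GRing.RMorphism.on Fp_eval.

Lemma Fp_evalE h : Fp_eval h = poly_Fp_eval h gamma.
Proof. by []. Qed.

End FpEmbedding.

Section FpGenerated.
Variables (F : finFieldType) (p m : nat) (gamma : F).
Hypotheses (pF : p \in [pchar F]) (cardF : #|F| = (p ^ m)%N).
Hypothesis gen : forall x : F, exists h : {poly 'F_p}, x = poly_Fp_eval h gamma.

Local Notation phi := (Fp_eval pF gamma).

Lemma Fp_eval_neq0 (h : {poly 'F_p}) : h != 0 -> (size h <= m)%N -> phi h != 0.
Proof.
move=> h_neq0 size_h; apply/eqP => phi_h0.
have rem_h x : exists r : {poly 'F_p}, ((size r < size h)%N && (x == phi r)).
  have [r ->] := gen x; exists (r %% h); rewrite ltn_modpN0 //=.
  by rewrite -Fp_evalE {1}(divp_eq r h) rmorphD rmorphM /= phi_h0 mulr0 add0r.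
pose coefs x : 'rV['F_p]_(size h).-1 := \row_(j < (size h).-1) (xchoose (rem_h x))`_j.
have coefs_inj : injective coefs.
  move=> x y /rowP coefsE.
  have /andP[size_x /eqP ->] := xchooseP (rem_h x).
  have /andP[size_y /eqP ->] := xchooseP (rem_h y).
  congr phi; apply/polyP => j; case: (ltnP j (size h).-1) => [lt_j | le_j].
    by have := coefsE (Ordinal lt_j); rewrite !mxE.
  by rewrite !nth_default // (leq_trans _ le_j) // -ltnS prednK ?size_poly_gt0.
have := leq_card coefs coefs_inj.
have p_prime := pcharf_prime pF.
rewrite card_mx cardF card_Fp // mul1n leq_exp2l ?prime_gt1 //.
by move: size_h; rewrite -size_poly_gt0 in h_neq0; lia.
Qed.

Lemma Fp_eval_inj_small (h1 h2 : {poly 'F_p}) :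
  (size h1 <= m)%N -> (size h2 <= m)%N -> phi h1 = phi h2 -> h1 = h2.
Proof.
move=> size_h1 size_h2 /eqP; rewrite -subr_eq0 -rmorphB; apply: contraTeq.
rewrite -subr_eq0 => h12_neq0; apply: Fp_eval_neq0 => //.
by rewrite (leq_trans (size_polyD _ _)) // size_polyN geq_max size_h1.
Qed.

Lemma Fp_eval_lead_at_neq0 (h : {poly 'F_p}) d c :
  lead_at d c h -> c != 0 -> (d < m)%N -> phi h != 0.
Proof.
move=> [size_h coef_h] c_neq0 lt_dm.
apply: Fp_eval_neq0; last exact: leq_trans size_h lt_dm.
by apply: contra_neq c_neq0 => h0; rewrite -coef_h h0 coef0.
Qed.

End FpGenerated.

Theorem theorem3p8 (F : finFieldType) (p m : nat) (gamma : F)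
  (n k : nat) (g : 'I_n -> {poly 'F_p}) :
  prime p -> p \in [pchar F] -> #|F| = (p ^ m)%N ->
  (forall x : F, exists h : {poly 'F_p}, x = poly_Fp_eval h gamma) ->
  (5 <= k)%N -> (2 * k <= n - 2)%N -> (n <= p ^ ((m - 1) %/ 4))%N ->
  (forall i, g i \is monic) -> (forall i, size (g i) = ((m - 1) %/ 4).+1) ->
  injective g ->
  ~~ (p %| (k ^ 2 * (k ^ 2 - 1)) %/ 12)%N ->
  is_nonGRS_MDS (Ckmx k (fun i => poly_Fp_eval (g i) gamma)).
Proof.
move=> p_prime pF cardF gen k_ge5 le_2k_n2 n_le g_monic size_g g_inj not_dvd.
have [j ?] : exists j, k = j.+3 by exists (k - 3)%N; lia.
subst k.
set t := ((m - 1) %/ 4)%N in n_le size_g.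
have t_gt0 : (0 < t)%N by rewrite lt0n; apply: contraTneq n_le => ->; rewrite expn0; lia.
have lt_4t_m : (4 * t < m)%N by rewrite /t in t_gt0 *; lia.
have size_g_le i : (size (g i) <= m)%N by rewrite size_g; lia.
have lead_g i : lead_at t 1 (g i).
  by split; [rewrite size_g | have /monicP := g_monic i; rewrite lead_coefE size_g].
pose phi := Fp_eval pF gamma.
have alpha_inj : injective (phi \o g).
  by move=> i1 i2 /(Fp_eval_inj_small cardF gen (size_g_le i1) (size_g_le i2)) /g_inj.
change (is_nonGRS_MDS (Ckmx j.+3 (phi \o g))).
split; last by apply: Ckmx_not_GRS => //; lia.
apply: MDS_of_row_free_colsub => [s s_inj||//]; last by lia.
rewrite colsub_Ckmx; apply: row_free_Ckmx; first by move=> l l' /alpha_inj /s_inj.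
have -> : \prod_(l < j.+3) ('X - (((phi \o g) \o s) l)%:P)
          = map_poly phi (\prod_(l < j.+3) ('X - (g (s l))%:P)) by rewrite map_prod_XsubC.
rewrite gap_disc_map; apply: (Fp_eval_lead_at_neq0 pF cardF gen _ _ lt_4t_m).
  exact: lead_at_gap_disc_prod_XsubC.
by rewrite -(dvdn_pcharf (pchar_Fp p_prime)).
Qed.
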